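(* Let $(G;\gamma_0,\gamma_1,\gamma_2)$ be a regular hypermap, $H=\langle\gamma_1,\gamma_2\rangle$ and $K=\langle\gamma_2,\gamma_0\rangle$. Then the hyperedge-multiplicity of its underlying hypergraph equals the index $\left|\bigcap_{x\in K}KH^x : K\right|$, where $H^x=x^{-1}Hx$.
   Context: A regular hypermap is identified with a triple $(G;\gamma_0,\gamma_1,\gamma_2)$ where $G$ is a finite group generated by three involutions $\gamma_0,\gamma_1,\gamma_2$. Put $H=\langle\gamma_1,\gamma_2\rangle$, $K=\langle\gamma_2,\gamma_0\rangle$. Hypervertices are the right cosets $Hg$, hyperedges the right cosets $Kg$, and a hypervertex and a hyperedge are incident iff the cosets intersect. The hypervertices incident with the hyperedge $K$ are the cosets $Hx$, $x\in K$. The hyperedge-multiplicity is the number of hyperedges $Kg$ that are incident with every hypervertex incident with the hyperedge $K$ (by regularity this is the same for every hyperedge). The underlying hypergraph is called simple if its hyperedge-multiplicity is $1$. Note $\bigcap_{x\in K}KH^x$ is a union of right cosets of $K$. *)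

From mathcomp Require Import all_boot all_fingroup.
Set Implicit Arguments. Unset Strict Implicit. Unset Printing Implicit Defensive.
Local Open Scope group_scope.

Definition involution (gT : finGroupType) (g : gT) : bool := (g != 1) && (g ^+ 2 == 1).

Definition regular_hypermap (gT : finGroupType) (G : {group gT}) (g0 g1 g2 : gT) : Prop :=
  [/\ involution g0, involution g1, involution g2 & G :=: <<[set g0; g1; g2]>>].

(* Hypervertices: right cosets H g; hyperedges: right cosets K g. *)
Definition hyperedge_multiplicity (gT : finGroupType) (G : {group gT}) (g0 g1 g2 : gT) : nat :=
  let H := <<[set g1; g2]>> in
  let K := <<[set g2; g0]>> in
  #|[set E in rcosets K G | [forall x in K, (H :* x) :&: E != set0]]|.

From mathcomp Require Import all_boot all_fingroup.

Set Implicit Arguments.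
Unset Strict Implicit.
Unset Printing Implicit Defensive.

Local Open Scope group_scope.

(* The hypervertex [H x] meets the hyperedge [K g] iff [g] lies in [K H x],
   and for [x] in [K] this double coset is [K H^x].  Hence the hyperedges
   incident with every hypervertex [H x], [x] in [K], are exactly the right
   cosets of [K] contained in the intersection of the [K H^x], and their
   number is the index of [K] in that intersection. *)

Section Incidence.

Variables (gT : finGroupType) (H K : {group gT}).

Lemma meet_rcosets x g : (H :* x :&: K :* g != set0) = (g \in K * (H :* x)).
Proof.
apply/set0Pn/mulsgP => [[y /setIP[yHx /rcosetP[k kK defy]]] | [k y kK yHx ->]].
  by exists k^-1 y; rewrite ?groupV // defy mulKg.
by exists y; rewrite inE yHx mem_rcoset invMg mulKVg groupV.
Qed.

Lemma mulg_conjsg_subgroup (A : {set gT}) x : x \in K -> K * A :^ x = K * A :* x.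
Proof.
by move=> xK; rewrite conjsgE mulgA rcoset_id ?groupV // mulgA.
Qed.

Lemma meet_rcosets_conj x g :
  x \in K -> (H :* x :&: K :* g != set0) = (g \in K * H :^ x).
Proof. by move=> xK; rewrite meet_rcosets mulg_conjsg_subgroup // mulgA. Qed.

Lemma incident_hyperedges (G : {group gT}) :
    H \subset G -> K \subset G ->
  [set E in rcosets K G | [forall x in K, H :* x :&: E != set0]]
    = rcosets K (\bigcap_(x in K) (K * H :^ x)).
Proof.
move=> sHG sKG; apply/setP=> E; rewrite inE; apply/andP/rcosetsP.
  case=> /rcosetsP[g _ ->] /forall_inP meetE; exists g => //.
  by apply/bigcapP=> x xK; rewrite -meet_rcosets_conj // meetE.
case=> g /bigcapP gI ->; split.
  apply/rcosetsP; exists g => //; apply: (subsetP (mul_subG sKG sHG)).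
  by rewrite -[H in K * H](conjsg1 H) gI.
by apply/forall_inP=> x xK; rewrite meet_rcosets_conj // gI.
Qed.

End Incidence.

Theorem mainTheorem2 (gT : finGroupType) (G : {group gT}) (g0 g1 g2 : gT) :
  regular_hypermap G g0 g1 g2 ->
  let H := <<[set g1; g2]>> in
  let K := <<[set g2; g0]>> in
  hyperedge_multiplicity G g0 g1 g2 = #| \bigcap_(x in K) (K * H :^ x) : K |.
Proof.
case=> _ _ _ defG H K.
have sub_gens (A : {set gT}) : A \subset [set g0; g1; g2] -> <<A>> \subset G.
  by move=> sA; rewrite defG genS.
by rewrite /hyperedge_multiplicity -/H -/K incident_hyperedges //;
  apply: sub_gens; rewrite subUset !sub1set !inE !eqxx !orbT.
Qed.
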